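(* Let $\mathfrak F=(X,\parallel,Y,S_\vee)$ be a frame satisfying (F0)–(F4). Then for every family $(A_j)_{j\in J}$ of stable sets, $\big(\bigvee_{j\in J}A_j\big)^*=\bigcap_{j\in J}A_j^*$. Consequently $(\mathcal G(X),\subseteq,\bigcap,\bigvee,\emptyset,X,(\cdot)^* )$ is a complete lattice with a minimal quasi-complementation operator (an antitone operation satisfying $\emptyset^*=X$ and $(A\vee C)^*=A^*\cap C^*$).
   Context: Polarity $(X,\parallel,Y)$, ${\parallel}\subseteq X\times Y$, $I$ its complement. $U'=\{y:\forall x\in U\;x\parallel y\}$ for $U\subseteq X$, $V'=\{x:\forall y\in V\;x\parallel y\}$ for $V\subseteq Y$; stable sets $A=A''\subseteq X$ form the complete lattice $\mathcal G(X)$ (meets = intersections, joins $\bigvee_jA_j=(\bigcup_jA_j)''$); co-stable sets $B=B''\subseteq Y$ form $\mathcal G(Y)$. $x\preceq z$ iff $\{x\}'\subseteq\{z\}'$, similarly on $Y$; separated means these are partial orders; $\Gamma u$ is the up-set of $u$; closed elements are the sets $\Gamma u$. Frame $(X,\parallel,Y,S_\vee)$ with $S_\vee\subseteq Y\times X$; $S_\vee x=\{y:yS_\vee x\}$, $yS_\vee=\{x:yS_\vee x\}$; $zS'_\vee x$ iff $\forall y(yS_\vee x\Rightarrow z\parallel y)$. Axioms: (F0) $\forall x\exists y\,xIy$ and $\forall y\exists x\,xIy$; (F1) separated; (F2) each $S_\vee x$ is a closed element of $\mathcal G(Y)$; (F3) each $yS_\vee$ is a down-set; (F4) for each $x$,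 $\{z:zS'_\vee x\}\in\mathcal G(X)$ and for each $z$, $\{x:zS'_\vee x\}\in\mathcal G(X)$. $x\perp z$ iff $xS'_\vee z$; $A^*=\{x:\forall z\in A\;x\perp z\}$. *)

Definition primeX {X Y : Type} (par : X -> Y -> Prop) (U : X -> Prop) : Y -> Prop :=
  fun y => forall x, U x -> par x y.
Definition primeY {X Y : Type} (par : X -> Y -> Prop) (V : Y -> Prop) : X -> Prop :=
  fun x => forall y, V y -> par x y.

Definition set_eq {T : Type} (A B : T -> Prop) : Prop := forall t, A t <-> B t.
Definition subset {T : Type} (A B : T -> Prop) : Prop := forall t, A t -> B t.

Definition stableX {X Y : Type} (par : X -> Y -> Prop) (A : X -> Prop) : Prop :=
  set_eq A (primeY par (primeX par A)).
Definition costableY {X Y : Type} (par : X -> Y -> Prop) (B : Y -> Prop) : Prop :=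
  set_eq B (primeX par (primeY par B)).

Definition leX {X Y : Type} (par : X -> Y -> Prop) (x z : X) : Prop :=
  forall y, par x y -> par z y.
Definition leY {X Y : Type} (par : X -> Y -> Prop) (y w : Y) : Prop :=
  forall x, par x y -> par x w.

Definition Sprime {X Y : Type} (par : X -> Y -> Prop) (S : Y -> X -> Prop) (z x : X) : Prop :=
  forall y, S y x -> par z y.

Definition F0 {X Y : Type} (par : X -> Y -> Prop) : Prop :=
  (forall x, exists y, ~ par x y) /\ (forall y, exists x, ~ par x y).
Definition F1 {X Y : Type} (par : X -> Y -> Prop) : Prop :=
  (forall x z, leX par x z -> leX par z x -> x = z) /\
  (forall y w, leY par y w -> leY par w y -> y = w).
(* each S_∨ x is a closed element Γ y of G(Y) *)
Definition F2 {X Y : Type} (par : X -> Y -> Prop) (S : Y -> X -> Prop) : Prop :=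
  forall x, costableY par (fun y => S y x) /\
            exists y0, set_eq (fun y => S y x) (fun y => leY par y0 y).
Definition F3 {X Y : Type} (par : X -> Y -> Prop) (S : Y -> X -> Prop) : Prop :=
  forall y x z, S y x -> leX par z x -> S y z.
Definition F4 {X Y : Type} (par : X -> Y -> Prop) (S : Y -> X -> Prop) : Prop :=
  (forall x, stableX par (fun z => Sprime par S z x)) /\
  (forall z, stableX par (fun x => Sprime par S z x)).

Definition is_frame {X Y : Type} (par : X -> Y -> Prop) (S : Y -> X -> Prop) : Prop :=
  F0 par /\ F1 par /\ F2 par S /\ F3 par S /\ F4 par S.

Definition perp {X Y : Type} (par : X -> Y -> Prop) (S : Y -> X -> Prop) (x z : X) : Prop :=
  Sprime par S x z.
Definition star {X Y : Type} (par : X -> Y -> Prop) (S : Y -> X -> Prop) (A : X -> Prop)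
  : X -> Prop := fun x => forall z, A z -> perp par S x z.

Definition bigjoin {X Y : Type} (par : X -> Y -> Prop) {J : Type} (A : J -> X -> Prop)
  : X -> Prop := primeY par (primeX par (fun x => exists j, A j x)).
Definition join2 {X Y : Type} (par : X -> Y -> Prop) (A C : X -> Prop) : X -> Prop :=
  primeY par (primeX par (fun x => A x \/ C x)).
Definition bigcap {X : Type} {J : Type} (A : J -> X -> Prop) : X -> Prop :=
  fun x => forall j, A j x.


(* The argument only uses the Galois connection of the polarity together with
   (F0) and (F4).
   Second, for the frame: by (F4), for fixed x the set {z | x ⊥ z} is stable,
   so it contains a set U iff it contains U''; hence the operation (.)^* does
   not see the closure: (U'')^* = U^*.  Since the union of the A_j is taken to
   its join by the closure, (\/_j A_j)^* = (U_j A_j)^* = /\_j A_j^*, and the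
   binary case is identical.  Also by (F4), A^* is the intersection of the
   stable sets {x | x ⊥ z}, z in A, hence stable. *)

Section Polarity.
Context {X Y : Type} (par : X -> Y -> Prop).

Definition closureX (U : X -> Prop) : X -> Prop := primeY par (primeX par U).

Lemma closure_extensive (U : X -> Prop) : subset U (closureX U).
Proof. intros x Ux y Uy; exact (Uy x Ux). Qed.

Lemma closure_least (U B : X -> Prop) :
  stableX par B -> subset U B -> subset (closureX U) B.
Proof.
  intros HB HUB x Hx; apply HB.
  intros y Hy; apply Hx.
  intros z Uz; exact (Hy z (HUB z Uz)).
Qed.

Lemma closure_stable (U : X -> Prop) : stableX par (closureX U).
Proof.
  intros x; split; [apply closure_extensive|].
  intros Hx y Hy; apply Hx.
  intros z Hz; exact (Hz y Hy).
Qed.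

Lemma stable_ext (A B : X -> Prop) : set_eq A B -> stableX par A -> stableX par B.
Proof.
  intros AB HA x; split; [intros Bx; apply closure_extensive; exact Bx|].
  intros Hx; apply AB, HA.
  intros y Hy; apply Hx.
  intros z Bz; apply Hy, AB, Bz.
Qed.

Lemma bigcap_stable (J : Type) (A : J -> X -> Prop) :
  (forall j, stableX par (A j)) -> stableX par (bigcap A).
Proof.
  intros HA x; split; [apply closure_extensive|].
  intros Hx j.
  apply (closure_least (bigcap A) (A j) (HA j)); [intros t Ht; exact (Ht j)|exact Hx].
Qed.

Lemma empty_stable :
  (forall x, exists y, ~ par x y) -> stableX par (fun _ : X => False).
Proof.
  intros Hx x; split; [intros []|].
  intros Hcl; destruct (Hx x) as [y Hy].
  apply Hy, Hcl; intros z [].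
Qed.

Lemma full_stable :
  (forall y, exists x, ~ par x y) -> stableX par (fun _ : X => True).
Proof.
  intros Hy x; split; [intros _|intros _; exact I].
  intros y Hxy; destruct (Hy y) as [z Hz].
  exact (False_ind _ (Hz (Hxy z I))).
Qed.

End Polarity.

Section Frame.
Context {X Y : Type} (par : X -> Y -> Prop) (S : Y -> X -> Prop).

Lemma star_antitone (A C : X -> Prop) :
  subset A C -> subset (star par S C) (star par S A).
Proof. intros AC x Hx z Az; exact (Hx z (AC z Az)). Qed.

Lemma star_empty : set_eq (star par S (fun _ : X => False)) (fun _ : X => True).
Proof. intros x; split; [intros _; exact I|intros _ z []]. Qed.

Hypothesis perp_left_stable : forall x, stableX par (fun z => Sprime par S x z).
Hypothesis perp_right_stable : forall z, stableX par (fun x => Sprime par S x z).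

Lemma star_closure (U : X -> Prop) :
  set_eq (star par S (closureX par U)) (star par S U).
Proof.
  intros x; split.
  - apply star_antitone, closure_extensive.
  - intros Hx z Hz.
    exact (closure_least par U _ (perp_left_stable x) Hx z Hz).
Qed.

(* First half of (F4): A^* is an intersection of stable sets, hence stable. *)
Lemma star_stable (A : X -> Prop) : stableX par (star par S A).
Proof.
  apply (stable_ext par (bigcap (fun p : {z | A z} => fun x => Sprime par S x (proj1_sig p)))).
  - intros x; split.
    + intros Hx z Az; exact (Hx (exist _ z Az)).
    + intros Hx [z Az]; exact (Hx z Az).
  - apply bigcap_stable; intros p; apply perp_right_stable.
Qed.

Lemma star_bigjoin (J : Type) (A : J -> X -> Prop) :
  set_eq (star par S (bigjoin par A)) (bigcap (fun j => star par S (A j))).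
Proof.
  intros x; split.
  - intros Hx j; apply (star_closure (fun t => exists j, A j t) x) in Hx.
    intros z Az; exact (Hx z (ex_intro _ j Az)).
  - intros Hx; apply (star_closure (fun t => exists j, A j t) x).
    intros z [j Az]; exact (Hx j z Az).
Qed.

Lemma star_join2 (A C : X -> Prop) :
  set_eq (star par S (join2 par A C)) (fun x => star par S A x /\ star par S C x).
Proof.
  intros x; split.
  - intros Hx; apply (star_closure (fun t => A t \/ C t) x) in Hx.
    split; intros z Hz; apply Hx; [left|right]; exact Hz.
  - intros [HA HC]; apply (star_closure (fun t => A t \/ C t) x).
    intros z [Hz|Hz]; [exact (HA z Hz)|exact (HC z Hz)].
Qed.

End Frame.

Theorem corollary3p13 (X Y : Type) (par : X -> Y -> Prop) (S : Y -> X -> Prop)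
  (Hframe : is_frame par S) :
  (* main claim: (\/_j A_j)^* = /\_j A_j^* for every family of stable sets *)
  (forall (J : Type) (A : J -> X -> Prop),
      (forall j, stableX par (A j)) ->
      set_eq (star par S (bigjoin par A)) (bigcap (fun j => star par S (A j)))) /\
  (* G(X) is a complete lattice: meets are intersections, joins are (union)'',
     bottom is the empty set, top is X *)
  (forall (J : Type) (A : J -> X -> Prop),
      (forall j, stableX par (A j)) ->
      stableX par (bigcap A) /\ stableX par (bigjoin par A) /\
      (forall j, subset (A j) (bigjoin par A)) /\
      (forall C, stableX par C -> (forall j, subset (A j) C) -> subset (bigjoin par A) C)) /\
  stableX par (fun _ : X => False) /\ stableX par (fun _ : X => True) /\
  (* (.)^* is a minimal quasi-complementation on G(X) *)
  (forall A, stableX par A -> stableX par (star par S A)) /\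
  (forall A C, stableX par A -> stableX par C -> subset A C ->
      subset (star par S C) (star par S A)) /\
  set_eq (star par S (fun _ : X => False)) (fun _ : X => True) /\
  (forall A C, stableX par A -> stableX par C ->
      set_eq (star par S (join2 par A C))
             (fun x => star par S A x /\ star par S C x)).
Proof.
  destruct Hframe as [[F0x F0y] [_ [_ [_ [F4a F4b]]]]].
  split; [intros J A _; exact (star_bigjoin par S F4b J A)|].
  split.
  { intros J A HA; split; [|split; [|split]].
    - exact (bigcap_stable par J A HA).
    - apply closure_stable.
    - intros j x Ax; apply closure_extensive; exists j; exact Ax.
    - intros C HC HAC; apply closure_least; [exact HC|].
      intros x [j Ax]; exact (HAC j x Ax). }
  split; [exact (empty_stable par F0x)|].
  split; [exact (full_stable par F0y)|].
  split; [intros A _; exact (star_stable par S F4a A)|].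
  split; [intros A C _ _; apply star_antitone|].
  split; [exact (star_empty par S)|].
  intros A C _ _; exact (star_join2 par S F4b A C).
Qed.
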